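(* Let $E$ be a complex Banach lattice, $A$ the set of all positive atoms of $E$ of norm one, $E_A=A^{dd}$, $E_{A^d}=A^d$, and let $T\in Z(E)$ be such that its restriction $T_A$ to $E_A$ is compact. Then there exist $T_1,T_2\in Z(E)$ with $T_1$ compact such that $T=T_1+T_2$, the restriction of $T_1$ to $E_A$ equals $T_A$, and the restriction of $T_2$ to $E_{A^d}$ equals the restriction $T_{A^d}$ of $T$ to $E_{A^d}$. *)

From HB Require Import structures.
From mathcomp Require Import all_boot all_order all_algebra.
From mathcomp Require Import all_classical all_reals all_analysis.
Set Implicit Arguments. Unset Strict Implicit. Unset Printing Implicit Defensive.
Import Order.TTheory GRing.Theory Num.Theory.
Import numFieldNormedType.Exports.
Local Open Scope classical_set_scope.
Local Open Scope ring_scope.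

Section BL.
Variables (R : realType) (V : completeNormedModType R).
Variables (le : V -> V -> Prop) (sup : V -> V -> V).

Definition absv (x : V) : V := sup x (- x).
Definition infv (x y : V) : V := - sup (- x) (- y).

Record banach_lattice : Prop := {
  bl_refl : forall x, le x x;
  bl_anti : forall x y, le x y -> le y x -> x = y;
  bl_trans : forall x y z, le x y -> le y z -> le x z;
  bl_add : forall x y z, le x y -> le (x + z) (y + z);
  bl_scale : forall (c : R) x y, 0 <= c -> le x y -> le (c *: x) (c *: y);
  bl_sup_l : forall x y, le x (sup x y);
  bl_sup_r : forall x y, le y (sup x y);
  bl_sup_least : forall x y z, le x z -> le y z -> le (sup x y) z;
  bl_norm : forall x y, le (absv x) (absv y) -> `|x| <= `|y|
}.

Definition rlinear (f : V -> V) : Prop :=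
  forall (a : R) (x y : V), f (a *: x + y) = a *: f x + f y.

Definition rcenter (f : V -> V) : Prop :=
  rlinear f /\ exists c : R, forall x, le 0 x -> le (- (c *: x)) (f x) /\ le (f x) (c *: x).

Definition pos_atom (a : V) : Prop :=
  le 0 a /\ a <> 0 /\ forall x, le 0 x -> le x a -> exists c : R, x = c *: a.

Definition A_set : set V := [set a | pos_atom a /\ `|a| = 1].

Definition dcompl (S : set V) : set V :=
  [set x | forall s, S s -> infv (absv x) (absv s) = 0].

(* The complex Banach lattice E = V_C = V + iV is modelled by V * V
   (pairs (x, y) standing for x + i y).  A complex-linear operator on E is
   a pair (S, R) of real operators acting as (S + iR). *)
Definition cop := ((V -> V) * (V -> V))%type.

Definition capp (T : cop) (z : V * V) : V * V :=
  (T.1 z.1 - T.2 z.2, T.2 z.1 + T.1 z.2).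

(* Center of the complex Banach lattice: Z(E) = Z(V) + i Z(V). *)
Definition ccenter (T : cop) : Prop := rcenter T.1 /\ rcenter T.2.

Definition cx (S : set V) : set (V * V) := [set z | S z.1 /\ S z.2].

Definition bounded_cx (B : set (V * V)) : Prop :=
  exists M : R, forall z, B z -> `|z.1| <= M /\ `|z.2| <= M.

Definition compact_on (S : set (V * V)) (T : cop) : Prop :=
  forall B, B `<=` S -> bounded_cx B -> compact (closure (capp T @` B)).

Definition E_A : set (V * V) := cx (dcompl (dcompl A_set)).
Definition E_Ad : set (V * V) := cx (dcompl A_set).
End BL.

(* A central operator [f] on a real Banach lattice acts on each normalised
   atom [a] as a scalar: [f a = eigen f a *: a].  Compactness of [T] on the band
   [A^dd] forces, for every [e > 0], only finitely many atoms to have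
   [|eigen f a| >= e]: distinct atoms are disjoint, so their images are
   [e]-separated inside a compact set.  The truncations [trunc e] (diagonal
   operators over these finitely many atoms) are central, converge uniformly on
   bounded sets as [e -> 0], and their images of balls lie in compact boxes;
   the limit [atomic_part f] is therefore a compact central operator that agrees
   with [f] on the atoms, hence on [A^dd], and vanishes on [A^d].  Applied to the
   real and imaginary parts of [T] this gives [T1], and [T2 := T - T1]. *)

From Pilot Require Import Defs.
From HB Require Import structures.
From mathcomp Require Import all_boot all_order all_algebra.
From mathcomp Require Import all_classical all_reals all_analysis.
From mathcomp Require Import ring.
Import Order.TTheory GRing.Theory Num.Theory.
Import numFieldNormedType.Exports.
Local Open Scope classical_set_scope.
Local Open Scope ring_scope.
Set Implicit Arguments. Unset Strict Implicit. Unset Printing Implicit Defensive.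

(** * Normed spaces *)

Lemma ultra_finite_union (T : Type) (I : eqType) (F : set_system T) (P : I -> set T)
    (s : seq I) :
  UltraFilter F -> F [set z | exists2 k, k \in s & P k z] -> exists2 k, k \in s & F (P k).
Proof.
move=> UF; elim: s => [|a s IH] Fs.
  have PF : ProperFilter F by apply: ultra_proper.
  by have [] := @filter_not_empty _ F PF; apply: filterS Fs => z [k].
have [Fa|Fna] := in_ultra_setVsetC (P a) UF; first by exists a; rewrite ?mem_head.
have [k ks Fk] : exists2 k, k \in s & F (P k).
  apply: IH; apply: filterS (filterI Fs Fna) => z [[k]].
  by rewrite in_cons => /orP[/eqP -> //|ks Pk] _; exists k.
by exists k; rewrite // in_cons ks orbT.
Qed.

Section NormedSpace.
Variables (R : realType) (W : completeNormedModType R).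

Lemma rlinear0 (f : W -> W) : rlinear f -> f 0 = 0.
Proof.
move=> lf; move: (lf 1 0 0); rewrite !scale1r addr0 => /eqP.
by rewrite -subr_eq0 opprD addrA subrr sub0r oppr_eq0 => /eqP.
Qed.

Lemma rlinearD (f : W -> W) x y : rlinear f -> f (x + y) = f x + f y.
Proof. by move=> lf; have := lf 1 x y; rewrite !scale1r. Qed.

Lemma rlinearZ (f : W -> W) (k : R) x : rlinear f -> f (k *: x) = k *: f x.
Proof. by move=> lf; have := lf k x 0; rewrite (rlinear0 lf) !addr0. Qed.

Lemma rlinearB (f : W -> W) x y : rlinear f -> f (x - y) = f x - f y.
Proof. by move=> lf; rewrite rlinearD // -scaleN1r rlinearZ // scaleN1r. Qed.

Lemma rlinear_sub (f g : W -> W) : rlinear f -> rlinear g -> rlinear (f \- g).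
Proof. by move=> lf lg k x y /=; rewrite lf lg opprD addrACA scalerBr. Qed.

Lemma rlinear_cvg (F : nat -> W -> W) (f : W -> W) : (forall n, rlinear (F n)) ->
  (forall x, F n x @[n --> \oo] --> f x) -> rlinear f.
Proof.
move=> Flin Ff k x y.
have Flim : F n (k *: x + y) @[n --> \oo] --> k *: f x + f y.
  rewrite (eq_cvg _ _ (fun n => Flin n k x y)); apply: cvgD => //.
  by apply: cvgZ => //; apply: cvg_cst.
exact: (cvg_unique (@norm_hausdorff _ W) (Ff _) Flim).
Qed.

Lemma cvgn_tail (u : W ^nat) (r : R ^nat) : r @ \oo --> 0 ->
  (forall N M, (N <= M)%N -> `|u M - u N| <= r N) -> cvgn u.
Proof.
move=> r0 tail; apply: cauchy_cvg; apply: cauchy_exP => e e0.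
have [N _ rN] := (cvgrPdist_lt _ _).1 r0 _ e0.
have rNe : r N < e.
  by have := rN N (leqnn N); rewrite sub0r normrN; apply: le_lt_trans; apply: ler_norm.
exists (u N), N => // M /= NM; rewrite -ball_normE /ball_ /= distrC.
exact: le_lt_trans (tail _ _ NM) rNe.
Qed.

Lemma limn_tail (u : W ^nat) (r : R ^nat) : cvgn u ->
  (forall N M, (N <= M)%N -> `|u M - u N| <= r N) -> forall N, `|limn u - u N| <= r N.
Proof.
move=> cu tail N.
have := @closed_cvg _ _ \oo _ (fun M => `|u M - u N|) [set t : R | t <= r N]
  (@closed_le _ (r N)); apply.
  by exists N => // M; apply: tail.
by apply: cvg_norm; apply: cvgB => //; apply: cvg_cst.
Qed.

(* The hypothesis makes [X] totally bounded, and [W] is complete. *)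
Lemma precompact_approx (X : set W) :
  (forall e : R, 0 < e -> exists2 K : set W, compact K &
     forall y, X y -> exists2 k, K k & `|y - k| < e) -> precompact X.
Proof.
move=> Xapprox; rewrite precompactE compact_ultra => F UF FX.
have PF : ProperFilter F by apply: ultra_proper.
have : cauchy F.
  apply: cauchy_exP => e e0; have e30 : 0 < e / 3 by rewrite divr_gt0.
  have [K cK XK] := Xapprox _ e30; move: cK; rewrite compact_cover => cK.
  have [D _ KD] := cK W K (fun k => ball k (e / 3)) (fun k _ => ball_open k (e / 3))
    (fun k Kk => ex_intro2 K (fun i => ball i (e / 3) k) k Kk (ballxx k e30)).
  suff /(filterS)/(_ FX)/(ultra_finite_union UF)[k _ Fk] :
      closure X `<=` [set z | exists2 k, k \in finmap.enum_fset D & ball k e z].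
    by exists k.
  move=> z /(_ _ (nbhsx_ballx z _ e30)) [y [Xy zy]].
  have [k' Kk' yk'] := XK y Xy; have [k Dk kk'] := KD k' Kk'.
  exists k => //; move: zy kk'; rewrite -!ball_normE /ball_ /= => zy kk'.
  have -> : k - z = (k - k') + (k' - y) + (y - z) by rewrite !addrA !subrK.
  rewrite [X in _ < X](_ : e = e / 3 + e / 3 + e / 3); last by field.
  apply: le_lt_trans (ler_normD _ _) _; rewrite ltrD //; last by rewrite distrC.
  by apply: le_lt_trans (ler_normD _ _) _; rewrite ltrD // distrC.
move=> /cauchy_cvg cvgF; exists (lim F); split => //.
exact: (@closed_cvg _ _ F PF id _ (@closed_closure _ X)).
Qed.

Lemma separated_finite (I : Type) (A : set I) (g : I -> W) (C : set W) (e : R) :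
  compact C -> 0 < e -> (forall i, A i -> C (g i)) ->
  (forall i j, A i -> A j -> `|g i - g j| < e -> i = j) -> finite_set A.
Proof.
move=> cC e0 AC gsep; have e20 : 0 < e / 2 by rewrite divr_gt0.
move: cC; rewrite compact_cover => /(_ W C (fun k => ball k (e / 2))
  (fun k _ => ball_open k (e / 2))) [k Ck|D _ CD].
  by exists k => //; apply: ballxx.
pose P k := [set i | A i /\ ball k (e / 2) (g i)].
have Pfin k : finite_set (P k).
  have [[i [Ai ki]]|P0] := pselect (exists i, P k i); last first.
    rewrite (_ : P k = set0) ?finite_set0 //.
    by apply/seteqP; split => // j Pj; apply: P0; exists j.
  apply: sub_finite_set (finite_set1 i) => j [Aj kj]; apply: gsep Aj Ai _.
  move: ki kj; rewrite -!ball_normE /ball_ /= => ki kj.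
  rewrite -(subrK k (g j)) -addrA (splitr e).
  by apply: le_lt_trans (ler_normD _ _) _; rewrite ltrD // distrC.
apply: sub_finite_set (bigcup_finite (finite_fset D) (fun k _ => Pfin k)).
by move=> i Ai; have [k Dk kgi] := CD (g i) (AC i Ai); exists k.
Qed.

Fixpoint span_box (s : seq W) (r : R) : set W :=
  if s is b :: s' then [set p.1 *: b + p.2 | p in closed_ball (0 : R) r `*` span_box s' r]
  else [set 0].

Lemma span_box_compact s r : 0 < r -> compact (span_box s r).
Proof.
move=> r0; elim: s => [|b s IH] /=; first exact: compact_set1.
apply: continuous_compact; last by apply: compact_setX => //; apply: closed_ballR_compact.
apply: continuous_subspaceT => p; apply: cvgD; last exact: cvg_snd.
by apply: cvgZ; [exact: cvg_fst | exact: cvg_cst].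
Qed.

Lemma span_box_sum s r (w : W -> R) : 0 < r -> (forall b, b \in s -> `|w b| <= r) ->
  span_box s r (\sum_(b <- s) w b *: b).
Proof.
move=> r0; elim: s => [|b s IH] w_le /=; first by rewrite big_nil.
rewrite big_cons; exists (w b, \sum_(c <- s) w c *: c) => //; split => /=.
  by rewrite closed_ballE // /closed_ball_ /= sub0r normrN w_le ?mem_head.
by apply: IH => c cs; rewrite w_le // in_cons cs orbT.
Qed.

Definition rcompact (f : W -> W) := forall M : R, precompact (f @` [set x | `|x| <= M]).

Lemma compact_on_pair (f g : W -> W) : rcompact f -> rcompact g -> compact_on setT (f, g).
Proof.
move=> fcpt gcpt B _ [M BM]; rewrite -precompactE.
pose K1 := closure (f @` [set x | `|x| <= M]).
pose K2 := closure (g @` [set x | `|x| <= M]).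
pose h (p : (W * W) * (W * W)) := (p.1.1 - p.1.2, p.2.1 + p.2.2).
have cK : compact (h @` ((K1 `*` K2) `*` (K2 `*` K1))).
  apply: continuous_compact.
    apply: continuous_subspaceT => p; apply: cvg_pair.
      by apply: cvgB; [apply: cvg_comp cvg_fst cvg_fst | apply: cvg_comp cvg_fst cvg_snd].
    by apply: cvgD; [apply: cvg_comp cvg_snd cvg_fst | apply: cvg_comp cvg_snd cvg_snd].
  by apply: compact_setX; apply: compact_setX; rewrite -precompactE.
apply: precompact_subset (compact_precompact (@norm_hausdorff _ _) cK).
move=> _ [z Bz <-]; have [z1M z2M] := BM z Bz.
exists ((f z.1, g z.2), (g z.1, f z.2)) => //.
by split; split; apply: subset_closure; [exists z.1|exists z.2|exists z.1|exists z.2].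
Qed.

Lemma capp_atom (T : cop W) a : rlinear T.1 -> rlinear T.2 -> capp T (a, 0) = (T.1 a, T.2 a).
Proof.
by move=> T1lin T2lin; rewrite /capp /= (rlinear0 T1lin) (rlinear0 T2lin) subr0 addr0.
Qed.

Lemma capp_add_sub (T S : cop W) z :
  capp T z = capp S z + capp (T.1 \- S.1, T.2 \- S.2) z.
Proof.
rewrite /capp /=; congr (_, _); last by rewrite addrACA !subrKC.
by rewrite opprB addrACA subrKC addKr.
Qed.

End NormedSpace.

Section VectorLattice.
Variables (R : realType) (V : completeNormedModType R).
Variables (le : V -> V -> Prop) (sup : V -> V -> V).
Hypothesis HB : banach_lattice le sup.

Local Notation "x <=v y" := (le x y) (at level 70).
Local Notation absv := (absv sup).
Local Notation infv := (infv sup).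

(** * Vector lattice arithmetic *)

Lemma levv x : x <=v x. Proof. exact: (bl_refl HB). Qed.
Lemma lev_trans y x z : x <=v y -> y <=v z -> x <=v z. Proof. exact: (bl_trans HB). Qed.
Lemma lev_anti x y : x <=v y -> y <=v x -> x = y. Proof. exact: (bl_anti HB). Qed.
Lemma levD2r z x y : x <=v y -> x + z <=v y + z. Proof. exact: (bl_add HB). Qed.
Lemma levD2l z x y : x <=v y -> z + x <=v z + y.
Proof. by rewrite ![z + _]addrC; apply: levD2r. Qed.
Lemma levD x y u v : x <=v y -> u <=v v -> x + u <=v y + v.
Proof. by move=> /(levD2r u) xy /(levD2l y); apply: lev_trans. Qed.
Lemma levZ (c : R) x y : 0 <= c -> x <=v y -> c *: x <=v c *: y.
Proof. exact: (bl_scale HB). Qed.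
Lemma lev_supl x y : x <=v sup x y. Proof. exact: (bl_sup_l HB). Qed.
Lemma lev_supr x y : y <=v sup x y. Proof. exact: (bl_sup_r HB). Qed.
Lemma supv_le x y z : x <=v z -> y <=v z -> sup x y <=v z.
Proof. exact: (bl_sup_least HB). Qed.

Lemma subv_ge0 x y : (0 <=v y - x) <-> (x <=v y).
Proof.
split=> [/(levD2r x)|/(levD2r (- x))]; first by rewrite add0r subrK.
by rewrite subrr.
Qed.

Lemma levN2 x y : x <=v y -> - y <=v - x.
Proof. by move=> /subv_ge0 xy; apply/subv_ge0; rewrite opprK addrC. Qed.

Lemma oppv_le0 x : 0 <=v x -> - x <=v 0.
Proof. by move/levN2; rewrite oppr0. Qed.

Lemma scalev_ge0 (c : R) x : 0 <= c -> 0 <=v x -> 0 <=v c *: x.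
Proof. by move=> c0 /(levZ c0); rewrite scaler0. Qed.

Lemma lev_scale2r (c d : R) x : 0 <=v x -> c <= d -> c *: x <=v d *: x.
Proof.
by move=> x0 cd; apply/subv_ge0; rewrite -scalerBl; apply: scalev_ge0; rewrite ?subr_ge0.
Qed.

Lemma coefv_ge0 (c : R) x : 0 <=v x -> x <> 0 -> 0 <=v c *: x -> 0 <= c.
Proof.
move=> x0 xn0 cx0; rewrite leNgt; apply/negP => c_lt0.
have : c *: x <=v 0.
  by rewrite -[c]opprK scaleNr; apply/oppv_le0/scalev_ge0; rewrite // oppr_ge0 ltW.
move=> /lev_anti/(_ cx0)/eqP; rewrite scaler_eq0 => /orP[/eqP c0|/eqP //].
by rewrite c0 ltxx in c_lt0.
Qed.

Lemma supvC x y : sup x y = sup y x.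
Proof.
by apply: lev_anti; apply: supv_le; (apply: lev_supr || apply: lev_supl).
Qed.

Lemma supvv x : sup x x = x.
Proof. by apply: lev_anti; [apply: supv_le; apply: levv | apply: lev_supl]. Qed.

Lemma supvDr z x y : sup (x + z) (y + z) = sup x y + z.
Proof.
apply: lev_anti; first by apply: supv_le; apply: levD2r; [apply: lev_supl|apply: lev_supr].
have le_subz : sup x y <=v sup (x + z) (y + z) - z.
  by apply: supv_le; rewrite -[X in X <=v _](addrK z); apply: levD2r;
    [apply: lev_supl|apply: lev_supr].
by have := levD2r z le_subz; rewrite subrK.
Qed.

Lemma supvZ (c : R) x y : 0 < c -> sup (c *: x) (c *: y) = c *: sup x y.
Proof.
move=> c0; have c_ge0 := ltW c0.
have cK u : c^-1 *: (c *: u) = u by rewrite scalerA mulVf ?gt_eqF ?scale1r.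
have cVK u : c *: (c^-1 *: u) = u by rewrite scalerA mulfV ?gt_eqF ?scale1r.
apply: lev_anti; first by apply: supv_le; apply: levZ c_ge0 _; [apply: lev_supl|apply: lev_supr].
rewrite -[X in _ <=v X]cVK; apply: levZ c_ge0 _.
apply: supv_le; rewrite -[X in X <=v _]cK; apply: levZ; rewrite ?invr_ge0 ?ltW //.
  exact: lev_supl.
exact: lev_supr.
Qed.

Lemma lev_infl x y : infv x y <=v x.
Proof. by rewrite /Defs.infv -[X in _ <=v X]opprK; apply/levN2/lev_supl. Qed.
Lemma lev_infr x y : infv x y <=v y.
Proof. by rewrite /Defs.infv -[X in _ <=v X]opprK; apply/levN2/lev_supr. Qed.
Lemma infv_ge x y z : z <=v x -> z <=v y -> z <=v infv x y.
Proof. by move=> zx zy; rewrite -[z]opprK; apply/levN2/supv_le; apply: levN2. Qed.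
Lemma infvC x y : infv x y = infv y x.
Proof. by rewrite /Defs.infv supvC. Qed.
Lemma infvv x : infv x x = x.
Proof. by rewrite /Defs.infv supvv opprK. Qed.
Lemma infvDr z x y : infv (x + z) (y + z) = infv x y + z.
Proof. by rewrite /Defs.infv !opprD supvDr opprD opprK. Qed.
Lemma infvZ (c : R) x y : 0 < c -> infv (c *: x) (c *: y) = c *: infv x y.
Proof. by move=> c0; rewrite /Defs.infv -!scalerN supvZ // scalerN. Qed.
Lemma lev_inf2 x y x' y' : x <=v x' -> y <=v y' -> infv x y <=v infv x' y'.
Proof.
move=> xx' yy'; apply: infv_ge; [apply: lev_trans xx'|apply: lev_trans yy'].
  exact: lev_infl.
exact: lev_infr.
Qed.

Lemma lev_infD u v w : 0 <=v u -> 0 <=v v -> 0 <=v w ->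
  infv (u + v) w <=v infv u w + infv v w.
Proof.
move=> u0 v0 w0; set r := infv (u + v) w.
have r_le : r - u <=v infv v w.
  apply: infv_ge.
    have /subv_ge0 ruv : r <=v u + v by apply: lev_infl.
    by apply/subv_ge0; rewrite opprB addrA (addrC v).
  by rewrite -[w]addr0; apply: levD; [apply: lev_infr|apply: oppv_le0].
rewrite -infvDr; apply: infv_ge.
  by have := levD2r u r_le; rewrite subrK addrC.
by rewrite -[r]addr0; apply: levD; [apply: lev_infr|apply: infv_ge].
Qed.

Lemma lev_absv x : x <=v absv x. Proof. exact: lev_supl. Qed.
Lemma lev_absvN x : - x <=v absv x. Proof. exact: lev_supr. Qed.
Lemma absv_le x y : x <=v y -> - x <=v y -> absv x <=v y. Proof. exact: supv_le. Qed.

Lemma absv_ge0 x : 0 <=v absv x.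
Proof.
have x2 : 0 <=v absv x + absv x.
  by rewrite -(subrr x); apply: levD; [apply: lev_absv|apply: lev_absvN].
have half : (2^-1 + 2^-1 : R) = 1 by field.
have -> : absv x = 2^-1 *: (absv x + absv x) by rewrite scalerDr -scalerDl half scale1r.
by apply: scalev_ge0; rewrite ?invr_ge0.
Qed.

Lemma absv_id x : 0 <=v x -> absv x = x.
Proof.
move=> x0; apply: lev_anti (lev_absv x).
by apply: absv_le; [apply: levv|apply: lev_trans (oppv_le0 x0) x0].
Qed.

Lemma absvN x : absv (- x) = absv x. Proof. by rewrite /Defs.absv opprK supvC. Qed.
Lemma absv0 : absv 0 = 0. Proof. exact/absv_id/levv. Qed.

Lemma absv_eq0 x : absv x = 0 -> x = 0.
Proof.
move=> x0; apply: lev_anti; first by rewrite -x0; apply: lev_absv.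
by rewrite -[x]opprK -oppr0; apply: levN2; rewrite -x0; apply: lev_absvN.
Qed.

Lemma lev_absvD u v : absv (u + v) <=v absv u + absv v.
Proof.
by apply: absv_le; rewrite ?opprD; apply: levD; (apply: lev_absv || apply: lev_absvN).
Qed.

Lemma lev_absvZ (c : R) u : absv (c *: u) <=v `|c| *: absv u.
Proof.
have [c0|c0] := leP 0 c.
  rewrite ger0_norm //; apply: absv_le; first exact/(levZ c0)/lev_absv.
  by rewrite -scalerN; apply/(levZ c0)/lev_absvN.
have Nc0 : 0 <= - c by rewrite oppr_ge0 ltW.
rewrite ltr0_norm //; apply: absv_le.
  have -> : c *: u = (- c) *: (- u) by rewrite scalerN scaleNr opprK.
  exact/(levZ Nc0)/lev_absvN.
by rewrite -scaleNr; apply/(levZ Nc0)/lev_absv.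
Qed.

Lemma normv_le x y : absv x <=v absv y -> `|x| <= `|y|. Proof. exact: (bl_norm HB). Qed.

Lemma normv_le_ge0 x y : 0 <=v x -> x <=v y -> `|x| <= `|y|.
Proof. by move=> x0 xy; apply: normv_le; rewrite !absv_id //; apply: lev_trans xy. Qed.

Definition posv x := sup x 0.
Definition negv x := sup (- x) 0.

Lemma posv_ge0 x : 0 <=v posv x. Proof. exact: lev_supr. Qed.
Lemma negv_ge0 x : 0 <=v negv x. Proof. exact: lev_supr. Qed.
Lemma negvE x : negv x = posv (- x). Proof. by []. Qed.

Lemma posv_sub_negv x : posv x - negv x = x.
Proof.
have E : sup (- x) 0 + x = sup x 0 by rewrite -supvDr addNr add0r supvC.
by rewrite /posv /negv -E (addrC _ x) addrK.
Qed.

Lemma norm_posv x : `|posv x| <= `|x|.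
Proof.
apply: normv_le; rewrite absv_id; last exact: posv_ge0.
by apply: supv_le; [apply: lev_absv|apply: absv_ge0].
Qed.

Lemma norm_negv x : `|negv x| <= `|x|.
Proof. by rewrite negvE -(normrN x) norm_posv. Qed.

(** * Disjointness and atoms *)

Definition disjv x y := infv (absv x) (absv y) = 0.

Lemma disjvC x y : disjv x y -> disjv y x.
Proof. by rewrite /disjv infvC. Qed.

Lemma disjv0 y : disjv 0 y.
Proof.
rewrite /disjv absv0; apply: lev_anti; first exact: lev_infl.
by apply: infv_ge; [apply: levv|apply: absv_ge0].
Qed.

Lemma disjvN x y : disjv x y -> disjv (- x) y.
Proof. by rewrite /disjv absvN. Qed.

Lemma disjv_le (c : R) u v w : absv u <=v c *: absv v -> disjv v w -> disjv u w.
Proof.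
move=> uv vw; set C := `|c| + 1.
have C0 : 0 < C by rewrite ltr_pwDr ?normr_ge0.
have u_le : absv u <=v C *: absv v.
  apply: lev_trans uv _; apply: lev_scale2r; first exact: absv_ge0.
  by rewrite (le_trans (ler_norm c)) ?lerDl.
have w_le : absv w <=v C *: absv w.
  rewrite -[X in X <=v _]scale1r; apply: lev_scale2r; first exact: absv_ge0.
  by rewrite lerDr.
apply: lev_anti; last by apply: infv_ge; apply: absv_ge0.
by have := lev_inf2 u_le w_le; rewrite infvZ // vw scaler0.
Qed.

Lemma disjvZ (c : R) v w : disjv v w -> disjv (c *: v) w.
Proof. exact: disjv_le (lev_absvZ c v). Qed.

Lemma disjvD u v w : disjv u w -> disjv v w -> disjv (u + v) w.
Proof.
move=> uw vw; apply: lev_anti; last by apply: infv_ge; apply: absv_ge0.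
apply: lev_trans (lev_inf2 (lev_absvD u v) (levv _)) _.
by have := lev_infD (absv_ge0 u) (absv_ge0 v) (absv_ge0 w); rewrite uw vw addr0.
Qed.

Lemma disjvB u v w : disjv u w -> disjv v w -> disjv (u - v) w.
Proof. by move=> uw /disjvN; apply: disjvD. Qed.

Lemma disjvv x : disjv x x -> x = 0.
Proof. by rewrite /disjv infvv => /absv_eq0. Qed.

Lemma disjvZ_self (c : R) x : disjv (c *: x) x -> c *: x = 0.
Proof.
have [->|c0 cxx] := eqVneq c 0; first by rewrite scale0r.
suff /disjvv -> : disjv x x by rewrite scaler0.
apply: (disjv_le (c := `|c^-1|) _ cxx).
by rewrite -[X in absv X <=v _](scalerK c0); apply: lev_absvZ.
Qed.

Lemma dcompl_le (S : set V) (c : R) u v :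
  absv u <=v c *: absv v -> dcompl sup S v -> dcompl sup S u.
Proof. by move=> uv vS s /vS; apply: disjv_le uv. Qed.

Lemma dcomplN (S : set V) x : dcompl sup S x -> dcompl sup S (- x).
Proof. by move=> xS s /xS /disjvN. Qed.

Lemma dcompl0 (S : set V) : dcompl sup S 0.
Proof. by move=> s _; apply: disjv0. Qed.

Lemma sub_dcompl2 (S : set V) : S `<=` dcompl sup (dcompl sup S).
Proof. by move=> s Ss x /(_ s Ss) /disjvC. Qed.

Lemma dcompl2_dcompl_eq0 (S : set V) x :
  dcompl sup (dcompl sup S) x -> dcompl sup S x -> x = 0.
Proof. by move=> xSdd xSd; apply/disjvv/xSdd. Qed.

Section Atom.
Variable a : V.
Hypothesis ha : pos_atom le a.

Lemma atom_ge0 : 0 <=v a. Proof. by case: ha. Qed.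
Lemma atom_neq0 : a <> 0. Proof. by case: ha => _ []. Qed.

Lemma atom_coef_ge0 (c : R) : 0 <=v c *: a -> 0 <= c.
Proof. exact: coefv_ge0 atom_ge0 atom_neq0. Qed.

Lemma atom_le_scale (n : R) y : 0 < n -> 0 <=v y -> y <=v n *: a ->
  exists c : R, y = c *: a.
Proof.
move=> n0 y0 yna; have nV0 : 0 <= n^-1 by rewrite invr_ge0 ltW.
case: ha => _ [_ /(_ (n^-1 *: y))] [||c yc].
- exact: scalev_ge0 nV0 y0.
- by have := levZ nV0 yna; rewrite scalerA mulVf ?gt_eqF ?scale1r.
by exists (n * c); rewrite -scalerA -yc scalerA divff ?gt_eqF ?scale1r.
Qed.

(* The coefficient of [x] along [a] is read off the infimum of [x] and [n a]
   for [n] large enough. *)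
Lemma atom_decomp_ge0 x : 0 <=v x ->
  exists c : R, [/\ 0 <= c, c * `|a| <= `|x|, 0 <=v x - c *: a & disjv (x - c *: a) a].
Proof.
move=> x0; have a_gt0 : 0 < `|a| by rewrite normr_gt0; apply/eqP/atom_neq0.
set n := `|x| / `|a| + 1; have n0 : 0 < n by rewrite ltr_pwDr ?divr_ge0.
set y := infv x (n *: a).
have y0 : 0 <=v y by apply: infv_ge => //; apply: scalev_ge0 (ltW n0) atom_ge0.
have [c yc] := atom_le_scale n0 y0 (lev_infr _ _).
have c0 : 0 <= c by apply: atom_coef_ge0; rewrite -yc.
have cx : c * `|a| <= `|x|.
  by have := normv_le_ge0 y0 (lev_infl _ _); rewrite yc normrZ ger0_norm.
have xca0 : 0 <=v x - c *: a by apply/subv_ge0; rewrite -yc; apply: lev_infl.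
have nc0 : 0 < n - c by rewrite subr_gt0 /n ltr_pwDr // ler_pdivlMr.
have nca0 : 0 <=v (n - c) *: a by apply: scalev_ge0 (ltW nc0) atom_ge0.
exists c; split => //.
have disj_nca : disjv (x - c *: a) ((n - c) *: a).
  by rewrite /disjv absv_id // absv_id // scalerBl infvDr -/y yc subrr.
apply/disjvC; apply: (disjv_le (c := (n - c)^-1) _ (disjvC disj_nca)).
rewrite (absv_id atom_ge0) absv_id // scalerA mulVf ?gt_eqF // scale1r.
exact: levv.
Qed.

Lemma atom_coef_exists x : exists c : R, `|c| * `|a| <= `|x| /\ disjv (x - c *: a) a.
Proof.
have [c1 [c1_ge0 c1_le _ disj1]] := atom_decomp_ge0 (posv_ge0 x).
have [c2 [c2_ge0 c2_le _ disj2]] := atom_decomp_ge0 (negv_ge0 x).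
exists (c1 - c2); split.
  have {}c1_le := le_trans c1_le (norm_posv x).
  have {}c2_le := le_trans c2_le (norm_negv x).
  have a0 := normr_ge0 a; have [c12|c12] := leP c2 c1.
    rewrite ger0_norm ?subr_ge0 // mulrBl lerBlDr (le_trans c1_le) //.
    by rewrite lerDl mulr_ge0.
  rewrite ltr0_norm ?subr_lt0 // opprB mulrBl lerBlDr (le_trans c2_le) //.
  by rewrite lerDl mulr_ge0.
have -> : x - (c1 - c2) *: a = (posv x - c1 *: a) - (negv x - c2 *: a).
  rewrite -{1}(posv_sub_negv x) scalerBl !opprB addrACA [RHS]addrACA.
  by rewrite (addrC (- negv x)).
exact: disjvB.
Qed.

Definition acoef x : R := xget 0 [set c : R | disjv (x - c *: a) a].

Lemma acoefP x : disjv (x - acoef x *: a) a.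
Proof.
have [c [_ xc]] := atom_coef_exists x.
exact: (xgetPex 0 (ex_intro (fun c => disjv (x - c *: a) a) c xc)).
Qed.

Lemma acoef_eq x c : disjv (x - c *: a) a -> acoef x = c.
Proof.
move=> xc; have := disjvB (acoefP x) xc.
have -> : x - acoef x *: a - (x - c *: a) = (c - acoef x) *: a.
  by rewrite scalerBl opprB addrC addrA subrK.
move=> /disjvZ_self/eqP; rewrite scaler_eq0 subr_eq0 => /orP[/eqP -> //|/eqP/atom_neq0 //].
Qed.

Lemma acoef_norm x : `|acoef x| * `|a| <= `|x|.
Proof. by have [c [cx xc]] := atom_coef_exists x; rewrite (acoef_eq xc). Qed.

Lemma acoef_linear (k : R) x y : acoef (k *: x + y) = k * acoef x + acoef y.
Proof.
apply: acoef_eq.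
have -> : k *: x + y - (k * acoef x + acoef y) *: a =
    k *: (x - acoef x *: a) + (y - acoef y *: a).
  by rewrite scalerDl -scalerA opprD addrACA scalerBr.
by apply: disjvD; [apply: disjvZ|]; apply: acoefP.
Qed.

Lemma acoef0 : acoef 0 = 0.
Proof. by apply: acoef_eq; rewrite scale0r subr0; apply: disjv0. Qed.

Lemma acoefD x y : acoef (x + y) = acoef x + acoef y.
Proof. by rewrite -{1}[x]scale1r acoef_linear mul1r. Qed.

Lemma acoefZ (k : R) x : acoef (k *: x) = k * acoef x.
Proof. by rewrite -[k *: x]addr0 acoef_linear acoef0 addr0. Qed.

Lemma acoefB x y : acoef (x - y) = acoef x - acoef y.
Proof. by rewrite -scaleN1r acoefD acoefZ mulN1r. Qed.

Lemma acoef_ge0 x : 0 <=v x -> 0 <= acoef x.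
Proof. by move=> /atom_decomp_ge0[c [c0 _ _ xc]]; rewrite (acoef_eq xc). Qed.

Lemma subv_acoef_ge0 x : 0 <=v x -> 0 <=v x - acoef x *: a.
Proof. by move=> /atom_decomp_ge0[c [_ _ xc0 xc]]; rewrite (acoef_eq xc). Qed.

Lemma acoef_disj x : disjv x a -> acoef x = 0.
Proof. by move=> xa; apply: acoef_eq; rewrite scale0r subr0. Qed.

Lemma acoef_id : acoef a = 1.
Proof. by apply: acoef_eq; rewrite scale1r subrr; apply: disjv0. Qed.

End Atom.

Lemma disjv_atoms a b : A_set le a -> A_set le b -> a <> b -> disjv a b.
Proof.
move=> [pa na] [pb nb] ab; have a0 := atom_ge0 pa; have b0 := atom_ge0 pb.
rewrite /disjv (absv_id a0) (absv_id b0); set y := infv a b.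
have y0 : 0 <=v y by apply: infv_ge.
have [s ys] : exists s : R, y = s *: a.
  by case: pa => _ [_]; apply => //; apply: lev_infl.
have [t yt] : exists t : R, y = t *: b.
  by case: pb => _ [_]; apply => //; apply: lev_infr.
have [s0|s0] := eqVneq s 0; first by rewrite ys s0 scale0r.
have st : s = t.
  have /(congr1 (fun v : V => `|v|)) := etrans (esym ys) yt.
  rewrite !normrZ na nb !mulr1 !ger0_norm //.
    by apply: (atom_coef_ge0 pb); rewrite -yt.
  by apply: (atom_coef_ge0 pa); rewrite -ys.
by case: ab; apply: (scalerI s0); rewrite -ys yt st.
Qed.

Lemma acoef_atom a b : A_set le a -> A_set le b -> a <> b -> acoef b a = 0.
Proof. by move=> Aa Ab ab; apply: (acoef_disj Ab.1); apply: disjv_atoms. Qed.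

(** * Central operators *)

Definition cbound (f : V -> V) (c : R) :=
  forall x, 0 <=v x -> - (c *: x) <=v f x /\ f x <=v c *: x.

Lemma rcenter_bound (f : V -> V) : rcenter le f -> exists2 c : R, 0 < c & cbound f c.
Proof.
case=> _ [c fc]; exists (`|c| + 1); first by rewrite ltr_pwDr.
have c_le : c <= `|c| + 1 by rewrite (le_trans (ler_norm c)) ?lerDl.
move=> x x0; have [fx_ge fx_le] := fc x x0; split.
  by apply: lev_trans fx_ge; apply/levN2/lev_scale2r.
by apply: lev_trans fx_le _; apply: lev_scale2r.
Qed.

Lemma cbound_absv (f : V -> V) (c : R) x : cbound f c -> 0 <=v x -> absv (f x) <=v c *: x.
Proof.
move=> fc x0; have [fx_ge fx_le] := fc x x0.
by apply: absv_le => //; rewrite -[X in _ <=v X]opprK; apply: levN2.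
Qed.

Lemma cbound_norm (f : V -> V) (c : R) x : rlinear f -> cbound f c -> 0 <= c ->
  `|f x| <= 2 * c * `|x|.
Proof.
move=> lf fc c0.
have fpos y : 0 <=v y -> `|y| <= `|x| -> `|f y| <= c * `|x|.
  move=> y0 yx; apply: le_trans (_ : `|c *: y| <= _).
    by apply: normv_le; rewrite (absv_id (scalev_ge0 c0 y0)); apply: cbound_absv.
  by rewrite normrZ ger0_norm // ler_wpM2l.
rewrite -{1}(posv_sub_negv x) rlinearB // -mulrA mulr_natl mulr2n.
apply: le_trans (ler_normB _ _) _.
by rewrite lerD // fpos ?norm_posv ?norm_negv //; [apply: posv_ge0|apply: negv_ge0].
Qed.

Lemma cboundB (f g : V -> V) (c d : R) : cbound f c -> cbound g d -> cbound (f \- g) (c + d).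
Proof.
move=> fc gd x x0; have [f_ge f_le] := fc x x0; have [g_ge g_le] := gd x x0.
rewrite scalerDl /=; split.
  by rewrite opprD; apply: levD f_ge _; apply: levN2.
by apply: levD f_le _; rewrite -[X in _ <=v X]opprK; apply: levN2.
Qed.

Lemma rcenterB (f g : V -> V) : rcenter le f -> rcenter le g -> rcenter le (f \- g).
Proof.
move=> [lf [cf fcf]] [lg [cg gcg]]; split; first exact: rlinear_sub.
by exists (cf + cg); apply: cboundB.
Qed.

Lemma norm_negv_le_dist x w : 0 <=v w -> `|negv x| <= `|x - w|.
Proof.
move=> w0; apply: normv_le; rewrite (absv_id (negv_ge0 x)).
apply: supv_le; last exact: absv_ge0.
apply: lev_trans (lev_absvN _); rewrite opprB -[X in X <=v _]add0r.
exact: levD2r.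
Qed.

Lemma cone_closed (u : V ^nat) l : (forall n, 0 <=v u n) -> u @ \oo --> l -> 0 <=v l.
Proof.
move=> u0 ul; suff negv0 : negv l = 0 by rewrite -(posv_sub_negv l) negv0 subr0; apply: posv_ge0.
apply/eqP; rewrite -normr_le0 leNgt; apply/negP => negv_gt0.
have [N _ uN] := (cvgrPdist_lt _ _).1 ul _ negv_gt0.
by have := uN N (leqnn N); rewrite /= ltNge (norm_negv_le_dist l (u0 N)).
Qed.

Lemma cbound_cvg (F : nat -> V -> V) (f : V -> V) (c : R) :
  (forall n, cbound (F n) c) -> (forall x, F n x @[n --> \oo] --> f x) -> cbound f c.
Proof.
move=> Fc Ff x x0; split; apply/subv_ge0.
  apply: (@cone_closed (fun n => F n x - - (c *: x))); last by apply: cvgB => //; apply: cvg_cst.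
  by move=> n; apply/subv_ge0; case: (Fc n x x0).
apply: (@cone_closed (fun n => c *: x - F n x)); last by apply: cvgB => //; apply: cvg_cst.
by move=> n; apply/subv_ge0; case: (Fc n x x0).
Qed.

Definition eigen (f : V -> V) a := acoef a (f a).

Lemma cbound_eigenE (f : V -> V) (c : R) a : 0 < c -> cbound f c -> pos_atom le a ->
  f a = eigen f a *: a.
Proof.
move=> c0 fc pa; have a0 := atom_ge0 pa; have [fa_ge fa_le] := fc a a0.
have fac0 : 0 <=v f a + c *: a.
  by move/subv_ge0: fa_ge; rewrite opprK.
have [s fas] : exists s : R, f a + c *: a = s *: a.
  apply: (atom_le_scale pa (_ : 0 < c + c)) fac0 _; first by rewrite addr_gt0.
  by rewrite scalerDl; apply: levD2r.
rewrite /eigen; have -> : f a = (s - c) *: a by rewrite scalerBl -fas addrK.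
by rewrite acoefZ // acoef_id // mulr1.
Qed.

Lemma cbound_eigen (f : V -> V) (c : R) a : 0 < c -> cbound f c -> pos_atom le a ->
  `|eigen f a| <= c.
Proof.
move=> c0 fc pa; have [fa_ge fa_le] := fc a (atom_ge0 pa).
rewrite (cbound_eigenE c0 fc pa) in fa_ge fa_le.
rewrite ler_norml; apply/andP; split.
  rewrite -subr_ge0 opprK; apply: (atom_coef_ge0 pa); rewrite scalerDl.
  by move/subv_ge0: fa_ge; rewrite opprK.
by rewrite -subr_ge0; apply: (atom_coef_ge0 pa); rewrite scalerBl; apply/subv_ge0.
Qed.

Lemma eigen_le_dist (f : V -> V) (c : R) a b : 0 < c -> cbound f c ->
  A_set le a -> A_set le b -> a <> b -> `|eigen f a| <= `|f a - f b|.
Proof.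
move=> c0 fc Aa Ab ab; have [pa na] := Aa; have ba : b <> a by move/esym.
have -> : eigen f a = acoef a (f a - f b).
  rewrite (cbound_eigenE c0 fc pa) (cbound_eigenE c0 fc Ab.1) acoefB // !acoefZ //.
  by rewrite acoef_id // (acoef_atom Ab Aa ba) mulr0 subr0 mulr1.
by have := acoef_norm pa (f a - f b); rewrite na mulr1.
Qed.

(* [g] maps [S^dd] into itself, and also into [S^d] because
   [g p = g (p - acoef a p *: a)] for every atom [a] of [S]. *)
Lemma cbound_dcompl2_eq0 (S : set V) (g : V -> V) (c : R) x :
  (forall a, S a -> pos_atom le a) -> rlinear g -> cbound g c ->
  (forall a, S a -> g a = 0) -> dcompl sup (dcompl sup S) x -> g x = 0.
Proof.
move=> Satom lg gc gS.
suff gpos y : dcompl sup (dcompl sup S) y -> g (posv y) = 0.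
  move=> xS; rewrite -(posv_sub_negv x) rlinearB // negvE.
  by rewrite !gpos ?subr0 //; apply: dcomplN.
move=> yS; set p := posv y; have p0 : 0 <=v p := posv_ge0 y.
have pS : dcompl sup (dcompl sup S) p.
  apply: (dcompl_le (c := 1) _ yS); rewrite scale1r absv_id //.
  by apply: supv_le; [apply: lev_absv|apply: absv_ge0].
apply: dcompl2_dcompl_eq0.
  by apply: (dcompl_le (c := c) _ pS); rewrite (absv_id p0); apply: cbound_absv.
move=> a Sa; have pa := Satom a Sa.
have -> : g p = g (p - acoef a p *: a).
  by rewrite rlinearB // rlinearZ // (gS a Sa) scaler0 subr0.
apply: disjv_le _ (acoefP pa p); rewrite (absv_id (subv_acoef_ge0 pa p0)).
exact: cbound_absv gc (subv_acoef_ge0 pa p0).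
Qed.

(** * Diagonal operators over finitely many atoms *)

Lemma lev_sum (I : eqType) (s : seq I) (F G : I -> V) :
  (forall i, i \in s -> F i <=v G i) -> \sum_(i <- s) F i <=v \sum_(i <- s) G i.
Proof.
elim: s => [|i s IH] FG; first by rewrite !big_nil; apply: levv.
rewrite !big_cons; apply: levD; first by apply: FG; rewrite mem_head.
by apply: IH => j js; apply: FG; rewrite in_cons js orbT.
Qed.

Lemma sum_acoef_le (l : seq V) x : uniq l -> (forall b, b \in l -> A_set le b) ->
  0 <=v x -> \sum_(b <- l) acoef b x *: b <=v x.
Proof.
elim: l x => [|a l IH] x ul latoms x0; first by rewrite big_nil.
move: ul => /= /andP[al ul].
have Aa : A_set le a by apply: latoms; rewrite mem_head.
have {}latoms b : b \in l -> A_set le b by move=> bl; apply: latoms; rewrite in_cons bl orbT.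
have := IH _ ul latoms (subv_acoef_ge0 Aa.1 x0).
rewrite (eq_big_seq (fun b => acoef b x *: b)); last first.
  move=> b bl; have ab : a <> b by move=> ab; rewrite ab bl in al.
  have Ab := latoms b bl.
  by rewrite (acoefB Ab.1) (acoefZ Ab.1) (acoef_atom Aa Ab ab) mulr0 subr0.
by rewrite big_cons => /(levD2l (acoef a x *: a)); rewrite addrCA subrr addr0.
Qed.

Section DiagonalOperator.
Variables (mu : V -> R) (l : seq V).
Hypotheses (l_uniq : uniq l) (l_atoms : forall b, b \in l -> A_set le b).

Definition diag_op x := \sum_(b <- l) (mu b * acoef b x) *: b.

Lemma diag_op_linear : rlinear diag_op.
Proof.
move=> k x y; rewrite /diag_op scaler_sumr -big_split /=; apply: eq_big_seq => b bl.
by rewrite (acoef_linear (l_atoms bl).1) mulrDr scalerDl mulrCA scalerA.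
Qed.

Lemma diag_op_cbound (m : R) : 0 <= m -> (forall b, b \in l -> `|mu b| <= m) ->
  cbound diag_op m.
Proof.
move=> m0 mu_le x x0; set bessel := \sum_(b <- l) acoef b x *: b.
have bessel_le : m *: bessel <=v m *: x := levZ m0 (sum_acoef_le l_uniq l_atoms x0).
have sumE k : \sum_(b <- l) (k * acoef b x) *: b = k *: bessel.
  by rewrite scaler_sumr; apply: eq_bigr => b _; rewrite scalerA.
have sum_le k k' : {in l, forall b, k b <= k' b} ->
    \sum_(b <- l) (k b * acoef b x) *: b <=v \sum_(b <- l) (k' b * acoef b x) *: b.
  move=> kk'; apply: lev_sum => b bl; have pb := (l_atoms bl).1.
  apply: lev_scale2r (atom_ge0 pb) _; apply: ler_wpM2r; first exact: (acoef_ge0 pb x0).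
  exact: kk' b bl.
split.
  apply: lev_trans (levN2 bessel_le) _; rewrite -scaleNr -sumE; apply: sum_le => b bl.
  by rewrite lerNl; apply: le_trans (mu_le b bl); rewrite -normrN ler_norm.
apply: lev_trans bessel_le; rewrite -sumE; apply: sum_le => b bl.
exact: le_trans (ler_norm _) (mu_le b bl).
Qed.

Lemma diag_op_atom a : A_set le a -> diag_op a = if a \in l then mu a *: a else 0.
Proof.
move=> Aa; rewrite /diag_op (eq_big_seq (fun b => if b == a then mu a *: a else 0)).
  rewrite -big_mkcond /= -big_filter; have [al|nal] := boolP (a \in l).
    by rewrite (filter_pred1_uniq l_uniq al) big_seq1.
  rewrite (_ : [seq b <- l | b == a] = [::]) ?big_nil //; apply/eqP.
  by rewrite -[_ == _]negbK -has_filter; apply/hasP => -[b bl /eqP ba]; rewrite -ba bl in nal.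
move=> b bl; have [->|ba] := eqVneq b a; first by rewrite acoef_id ?mulr1 //; case: Aa.
by rewrite (acoef_atom Aa (l_atoms bl)) ?mulr0 ?scale0r // => ab; rewrite ab eqxx in ba.
Qed.

Lemma diag_op_dcompl x : dcompl sup (A_set le) x -> diag_op x = 0.
Proof.
move=> xA; rewrite /diag_op big1_seq // => b /andP[_ bl].
by rewrite (acoef_disj (l_atoms bl).1 (xA b (l_atoms bl))) mulr0 scale0r.
Qed.

End DiagonalOperator.

(** * The atomic part of a central operator *)

Definition big_atoms (f : V -> V) (e : R) := [set a | A_set le a /\ e <= `|eigen f a|].

Lemma big_atoms_finite (f : V -> V) (C : set V) : rcenter le f -> compact C ->
  (forall a, A_set le a -> C (f a)) -> forall e : R, 0 < e -> finite_set (big_atoms f e).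
Proof.
move=> fc cC fC e e0; have [c c0 f_bound] := rcenter_bound fc.
apply: (separated_finite (g := f)) cC e0 _ _; first by move=> a [Aa _]; apply: fC.
move=> a b [Aa ea] [Ab _] fab; apply: contrapT => ab.
by have := lt_le_trans fab (le_trans ea (eigen_le_dist c0 f_bound Aa Ab ab)); rewrite ltxx.
Qed.

Section AtomicPart.
Variables (f : V -> V) (c : R).
Hypotheses (f_lin : rlinear f) (c_gt0 : 0 < c) (f_bound : cbound f c).
Hypothesis big_atoms_fin : forall e : R, 0 < e -> finite_set (big_atoms f e).

Definition atoms_above (e : R) : seq V := finmap.enum_fset (fset_set (big_atoms f e)).

Lemma atoms_above_uniq e : uniq (atoms_above e).
Proof. exact: finmap.fset_uniq. Qed.

Lemma mem_atoms_above e a : 0 < e -> a \in atoms_above e <-> big_atoms f e a.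
Proof. by move=> e0; rewrite (in_fset_set (big_atoms_fin e0)) in_setE. Qed.

Lemma atoms_above_atoms e b : 0 < e -> b \in atoms_above e -> A_set le b.
Proof. by move=> e0 /(mem_atoms_above _ e0) []. Qed.

Definition trunc (e : R) := diag_op (eigen f) (atoms_above e).

Lemma trunc_linear e : 0 < e -> rlinear (trunc e).
Proof. by move=> e0; apply: diag_op_linear => b; apply: atoms_above_atoms. Qed.

Lemma trunc_cbound e : 0 < e -> cbound (trunc e) c.
Proof.
move=> e0; have l_atoms b := @atoms_above_atoms e b e0.
apply: (diag_op_cbound (atoms_above_uniq e) l_atoms (ltW c_gt0)) => b /l_atoms Ab.
exact: cbound_eigen c_gt0 f_bound Ab.1.
Qed.

Lemma atoms_above_filter e1 e2 : 0 < e1 -> e1 <= e2 ->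
  perm_eq [seq b <- atoms_above e1 | e2 <= `|eigen f b|] (atoms_above e2).
Proof.
move=> e10 e12; have e20 := lt_le_trans e10 e12.
apply: uniq_perm; [by rewrite filter_uniq // atoms_above_uniq | exact: atoms_above_uniq |].
move=> b; rewrite mem_filter; apply/andP/idP.
  by case=> eb /(mem_atoms_above _ e10) [Ab _]; apply/(mem_atoms_above _ e20).
move=> /(mem_atoms_above _ e20) [Ab eb]; split => //.
by apply/(mem_atoms_above _ e10); split => //; apply: le_trans eb.
Qed.

(* The difference is the diagonal operator over the atoms whose eigenvalue lies
   in [[e1, e2)], which is central with bound [e2]. *)
Lemma trunc_tail e1 e2 x : 0 < e1 -> e1 <= e2 ->
  `|trunc e1 x - trunc e2 x| <= 2 * e2 * `|x|.
Proof.
move=> e10 e12; have e20 := lt_le_trans e10 e12.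
rewrite /trunc /diag_op (bigID (fun b => e2 <= `|eigen f b|)) /= -big_filter.
rewrite (perm_big _ (atoms_above_filter e10 e12)) addrC addrK -big_filter.
set l := [seq b <- _ | _].
have l_uniq : uniq l by rewrite filter_uniq // atoms_above_uniq.
have l_atoms b : b \in l -> A_set le b.
  by rewrite mem_filter => /andP[_]; apply: atoms_above_atoms.
apply: (@cbound_norm (diag_op (eigen f) l)); last exact: ltW e20.
  exact: diag_op_linear l_atoms.
apply: (diag_op_cbound l_uniq l_atoms (ltW e20)) => b.
by rewrite mem_filter -ltNge => /andP[/ltW].
Qed.

Lemma trunc_atom e a : 0 < e -> A_set le a ->
  trunc e a = if e <= `|eigen f a| then f a else 0.
Proof.
move=> e0 Aa; have l_atoms b := @atoms_above_atoms e b e0.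
rewrite /trunc (diag_op_atom (eigen f) (atoms_above_uniq e) l_atoms Aa).
rewrite -(cbound_eigenE c_gt0 f_bound Aa.1); have [ea|ea] := boolP (e <= _).
  by rewrite ifT //; apply/(mem_atoms_above _ e0).
by rewrite ifF //; apply/negP => /(mem_atoms_above _ e0) [_ ea']; rewrite ea' in ea.
Qed.

Lemma trunc_dcompl e x : 0 < e -> dcompl sup (A_set le) x -> trunc e x = 0.
Proof. by move=> e0; apply: diag_op_dcompl => b; apply: atoms_above_atoms. Qed.

Lemma trunc_span_box e r x : 0 < e -> 0 < r -> `|x| <= r ->
  span_box (atoms_above e) (c * r) (trunc e x).
Proof.
move=> e0 r0 xr; apply: span_box_sum; first exact: mulr_gt0.
move=> b /(atoms_above_atoms e0) [pb nb]; rewrite normrM ler_pM //.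
  exact: cbound_eigen c_gt0 f_bound pb.
by apply: le_trans xr; have := acoef_norm pb x; rewrite nb mulr1.
Qed.

Lemma trunc_harmonic_tail x N M : (N <= M)%N ->
  `|trunc (harmonic M) x - trunc (harmonic N) x| <= 2 * harmonic N * `|x|.
Proof.
move=> NM; apply: trunc_tail; first exact: harmonic_gt0.
by rewrite /= lef_pV2 ?posrE // ler_nat ltnS.
Qed.

Definition atomic_part x := lim (trunc (harmonic n) x @[n --> \oo]).

Lemma atomic_part_cvg x : trunc (harmonic n) x @[n --> \oo] --> atomic_part x.
Proof.
apply: (cvgn_tail (r := fun N => 2 * harmonic N * `|x|)) (trunc_harmonic_tail x).
rewrite [X in _ --> X](_ : 0 = 2 * 0 * `|x|); last by rewrite mulr0 mul0r.
by apply: cvgM; [apply: cvgM; [apply: cvg_cst | apply: cvg_harmonic] | apply: cvg_cst].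
Qed.

Lemma atomic_part_tail x N :
  `|atomic_part x - trunc (harmonic N) x| <= 2 * harmonic N * `|x|.
Proof.
exact: (limn_tail (u := fun n => trunc (harmonic n) x) (r := fun N => 2 * harmonic N * `|x|)
  (atomic_part_cvg (x := x)) (trunc_harmonic_tail x) N).
Qed.

Lemma atomic_part_linear : rlinear atomic_part.
Proof. exact: rlinear_cvg (fun n => trunc_linear (harmonic_gt0 n)) atomic_part_cvg. Qed.

Lemma atomic_part_cbound : cbound atomic_part c.
Proof. exact: cbound_cvg (fun n => trunc_cbound (harmonic_gt0 n)) atomic_part_cvg. Qed.

Lemma atomic_part_dcompl x : dcompl sup (A_set le) x -> atomic_part x = 0.
Proof.
move=> xA; rewrite /atomic_part; apply: (cvg_lim (@norm_hausdorff _ V)).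
rewrite (_ : (fun n => _) = cst 0); first exact: cvg_cst.
by apply/funext => n; apply: trunc_dcompl xA; apply: harmonic_gt0.
Qed.

Lemma atomic_part_atom a : A_set le a -> atomic_part a = f a.
Proof.
move=> Aa; rewrite /atomic_part; apply: (cvg_lim (@norm_hausdorff _ V)).
apply: cvg_near_cst.
have [eigen0|eigen_neq0] := eqVneq (eigen f a) 0.
  apply: nearW => n; rewrite trunc_atom ?harmonic_gt0 //.
  by case: ifP => // _; rewrite (cbound_eigenE c_gt0 f_bound Aa.1) eigen0 scale0r.
have eigen_gt0 : 0 < `|eigen f a| by rewrite normr_gt0.
apply: filterS (near_infty_natSinv_lt (PosNum eigen_gt0)) => n /ltW ea.
by rewrite trunc_atom ?harmonic_gt0 // ea.
Qed.

Lemma atomic_part_dcompl2 x :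
  dcompl sup (dcompl sup (A_set le)) x -> atomic_part x = f x.
Proof.
move=> xA; apply/esym/eqP; rewrite -subr_eq0; apply/eqP.
apply: (cbound_dcompl2_eq0 (g := f \- atomic_part) (fun a (Aa : A_set le a) => Aa.1)
  (rlinear_sub f_lin atomic_part_linear) (cboundB f_bound atomic_part_cbound) _ xA).
by move=> a Aa /=; rewrite atomic_part_atom // subrr.
Qed.

Lemma atomic_part_rcompact : rcompact atomic_part.
Proof.
move=> M; apply: precompact_approx => e e0.
set r := `|M| + 1; have r0 : 0 < r by rewrite ltr_pwDr.
have er0 : 0 < e / (2 * r) by rewrite divr_gt0 // mulr_gt0.
have [N _ /(_ N (leqnn N)) /= hN] := near_infty_natSinv_lt (PosNum er0).
exists (span_box (atoms_above (harmonic N)) (c * r)).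
  by apply: span_box_compact; rewrite mulr_gt0.
move=> _ [x /= xM <-]; have xr : `|x| <= r.
  by apply: le_trans xM _; rewrite (le_trans (ler_norm M)) ?lerDl.
exists (trunc (harmonic N) x); first exact: trunc_span_box.
apply: le_lt_trans (atomic_part_tail x N) _.
apply: le_lt_trans (_ : 2 * harmonic N * r < e).
  by rewrite ler_pM2l ?mulr_gt0 ?harmonic_gt0.
by rewrite mulrAC mulrC -ltr_pdivlMr ?mulr_gt0.
Qed.

End AtomicPart.

Lemma rcenter_atomic_part (f : V -> V) : rcenter le f ->
  (forall e : R, 0 < e -> finite_set (big_atoms f e)) ->
  exists f1 : V -> V, [/\ rcenter le f1,
    (forall x, dcompl sup (dcompl sup (A_set le)) x -> f1 x = f x),
    (forall x, dcompl sup (A_set le) x -> f1 x = 0) & rcompact f1].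
Proof.
move=> fc big_fin; have [c c0 f_bound] := rcenter_bound fc.
exists (atomic_part f); split.
- by split; [exact: atomic_part_linear | exists c; exact: atomic_part_cbound].
- exact: atomic_part_dcompl2 fc.1 c0 f_bound big_fin.
- exact: atomic_part_dcompl.
exact: atomic_part_rcompact c0 f_bound big_fin.
Qed.

Lemma compact_on_EA_atoms (T : cop V) : ccenter le T -> compact_on (E_A le sup) T ->
  exists2 C : set V, compact C & forall a, A_set le a -> C (T.1 a) /\ C (T.2 a).
Proof.
move=> [[T1lin _] [T2lin _]] TEA.
set K := closure (capp T @` [set (a, 0) | a in A_set le]).
have cK : compact K.
  apply: TEA; first by move=> _ [a Aa <-]; split; [apply: sub_dcompl2 | apply: dcompl0].
  by exists 1 => _ [a [_ na] <-]; rewrite /= na normr0 ler01.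
exists (fst @` K `|` snd @` K).
  by apply: compactU; apply: continuous_compact cK; apply: continuous_subspaceT => p;
    [exact: cvg_fst | exact: cvg_snd].
move=> a Aa; have Ka : K (T.1 a, T.2 a).
  by apply: subset_closure; exists (a, 0); [exists a | apply: capp_atom].
by split; [left | right]; exists (T.1 a, T.2 a).
Qed.

End VectorLattice.

Theorem mainTheorem9 (R : realType) (V : completeNormedModType R)
  (le : V -> V -> Prop) (sup : V -> V -> V)
  (HBL : banach_lattice le sup)
  (T : cop V) (HT : ccenter le T)
  (HTA : compact_on (E_A le sup) T) :
  exists T1 T2 : cop V,
    ccenter le T1 /\ ccenter le T2 /\ compact_on setT T1 /\
    (forall z, capp T z = capp T1 z + capp T2 z) /\
    (forall z, E_A le sup z -> capp T1 z = capp T z) /\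
    (forall z, E_Ad le sup z -> capp T2 z = capp T z).
Proof.
have [C cC TC] := compact_on_EA_atoms HBL HT HTA.
have [T1c T2c] := HT.
have [f1 [f1c f1A f1Ad f1cpt]] := rcenter_atomic_part HBL T1c
  (big_atoms_finite HBL T1c cC (fun a Aa => (TC a Aa).1)).
have [g1 [g1c g1A g1Ad g1cpt]] := rcenter_atomic_part HBL T2c
  (big_atoms_finite HBL T2c cC (fun a Aa => (TC a Aa).2)).
exists (f1, g1), (T.1 \- f1, T.2 \- g1).
split; first by split.
split; first by split; apply: (rcenterB HBL).
split; first exact: compact_on_pair.
split; first by move=> z; apply: capp_add_sub.
split => z [z1 z2] /=; rewrite /capp /=; first by rewrite !f1A // !g1A.
by rewrite !f1Ad // !g1Ad // !subr0.
Qed.
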